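(* The set $Sort_2$ of $2$-sortable permutations is a permutation class whose basis (the set of minimal permutations, under pattern containment, not in $Sort_2$) is infinite; in particular the basis contains every permutation $\alpha^{(j)}$, $j\ge0$, where $\alpha^{(j)}=2j+4,\ 3,\ \omega^{(j)},\ 1,\ 5,\ 2$ and $\omega^{(j)}=2j+2,2j+5,2j,2j+3,\dots,6,9,4,7$ is the concatenation over $i=j,j-1,\dots,1$ of the pairs $2i+2,2i+5$.
   Context: The $\mathfrak{D}^k\mathfrak{I}$ machine consists of $k$ stacks $D_1,\dots,D_k$ (decreasing stacks) followed in series by a stack $I$ (increasing stack). The input permutation is read from left to right. The elements of each $D_i$ must be in decreasing order from top to bottom (top is largest), and those of $I$ in increasing order from top to bottom (top is smallest). Operations: $d_0$ pushes the next input element into $D_1$; $d_i$ ($1\le i\le k-1$) moves the top of $D_i$ to $D_{i+1}$; $d_k$ moves the top of $D_k$ to $I$; $d_{k+1}$ pops the top of $I$ and appends it to the output. An operation is legal if it respects the stack restrictions. A permutation $\pi$ is $k$-sortable if some sequence of legal operations outputs the elements of $\pi$ in increasing order; $Sort_k$ is the set of $k$-sortable permutations. A class is a downset of the pattern containment poset. *)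

From mathcomp Require Import all_boot.
Set Implicit Arguments. Unset Strict Implicit. Unset Printing Implicit Defensive.

Definition is_perm (s : seq nat) : Prop := perm_eq s (iota 1 (size s)).

Definition order_iso (t p : seq nat) : Prop :=
  size t = size p /\
  forall i j, i < size t -> j < size t ->
    (nth 0 t i < nth 0 t j) = (nth 0 p i < nth 0 p j).

Definition contains (s p : seq nat) : Prop :=
  exists t, subseq t s /\ order_iso t p.

(* Configuration: remaining input, the k+1 stacks (indices 0..k-1 are
   D_1..D_k, index k is I; each stack is listed top first), and output. *)
Record config := Config { inp : seq nat; stks : seq (seq nat); out : seq nat }.

Definition can_push (k j x : nat) (st : seq nat) : bool :=
  match st with
  | [::] => true
  | t :: _ => if j < k then t < x
              else x < t
  end.

(* Operation d_op:  op = 0 : input -> D_1;  1 <= op <= k-1 : D_op -> D_(op+1);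
   op = k : D_k -> I;  op = k+1 : I -> output.  None = illegal. *)
Definition step (k op : nat) (c : config) : option config :=
  if op <= k then
    let dst := nth [::] (stks c) op in
    if op == 0 then
      match inp c with
      | [::] => None
      | x :: rest =>
          if can_push k op x dst then
            Some (Config rest (set_nth [::] (stks c) op (x :: dst)) (out c))
          else None
      end
    else
      match nth [::] (stks c) op.-1 with
      | [::] => None
      | x :: rest =>
          if can_push k op x dst then
            Some (Config (inp c)
                   (set_nth [::] (set_nth [::] (stks c) op.-1 rest) op (x :: dst))
                   (out c))
          else None
      end
  else if op == k.+1 then
    match nth [::] (stks c) k with
    | [::] => None
    | x :: rest => Some (Config (inp c) (set_nth [::] (stks c) k rest) (rcons (out c) x))
    end
  else None.

Fixpoint run (k : nat) (ops : seq nat) (c : config) : option config :=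
  match ops with
  | [::] => Some c
  | op :: ops' =>
      match step k op c with
      | None => None
      | Some c' => run k ops' c'
      end
  end.

Definition sortable (k : nat) (pi : seq nat) : Prop :=
  exists ops : seq nat,
    run k ops (Config pi (nseq k.+1 [::]) [::])
    = Some (Config [::] (nseq k.+1 [::]) (sort leq pi)).

Definition Sort (k : nat) (s : seq nat) : Prop := is_perm s /\ sortable k s.

Definition is_class (C : seq nat -> Prop) : Prop :=
  (forall s, C s -> is_perm s) /\
  (forall s p, C s -> is_perm p -> contains s p -> C p).

Definition in_basis (C : seq nat -> Prop) (b : seq nat) : Prop :=
  is_perm b /\ ~ C b /\
  (forall p, is_perm p -> contains b p -> size p < size b -> C p).

Definition omega (j : nat) : seq nat :=
  flatten [seq [:: 2 * i + 2; 2 * i + 5] | i <- rev (iota 1 j)].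

Definition alpha (j : nat) : seq nat :=
  [:: 2 * j + 4; 3] ++ omega j ++ [:: 1; 5; 2].

From mathcomp Require Import all_boot zify.
Set Implicit Arguments. Unset Strict Implicit. Unset Printing Implicit Defensive.

(** The class property is proved by simulation: erasing from a sorting run on
   [s] every entry outside an occurrence of the pattern [p], and renaming the
   others order-isomorphically, leaves a sorting run on [p], because each stack
   restriction only compares the pushed entry with the entry on top.

   [alpha j] is not 2-sortable because its moves are forced.  Once [2j+4] is
   in [D2] and [3] in [D1], each pair [2i+2, 2i+5] can only be routed so that
   [2i+4] and [2i+5] end up in [I] and [2i+2] in [D2], and finally [1] cannot
   enter [D1] above [3].  Every deviation leads to a configuration in which an
   entry [w] of [I] waits for a smaller [v], while a larger [y] preceding [v]
   in the input can neither enter [I] nor let [v] overtake it in [D1, D2].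

   Conversely, after deleting any entry the same routing of the pairs leads to
   a configuration that can be emptied in increasing order. *)

(** * The machine with two decreasing stacks *)

Notation cfg i a b c o := (Config i [:: a; b; c] o).

Definition pushable (r : rel nat) (z : nat) (s : seq nat) : bool :=
  if s is h :: _ then r z h else true.

Definition step2 (op : nat) (i a b c o : seq nat) : option config :=
  match op with
  | 0 => if i is z :: i' then
           if pushable gtn z a then Some (cfg i' (z :: a) b c o) else None
         else None
  | 1 => if a is z :: a' then
           if pushable gtn z b then Some (cfg i a' (z :: b) c o) else None
         else None
  | 2 => if b is z :: b' then
           if pushable ltn z c then Some (cfg i a b' (z :: c) o) else None
         else None
  | 3 => if c is z :: c' then Some (cfg i a b c' (rcons o z)) else None
  | _ => None
  end.

Lemma step2E op i a b c o : step 2 op (cfg i a b c o) = step2 op i a b c o.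
Proof. by case: op => [|[|[|[|op]]]]. Qed.

Lemma run_cat k ops1 ops2 x :
  run k (ops1 ++ ops2) x = if run k ops1 x is Some y then run k ops2 y else None.
Proof. by elim: ops1 x => //= op ops IH x; case: (step k op x). Qed.

Definition reach (x y : config) : Prop := exists ops, run 2 ops x = Some y.

Lemma reach_refl x : reach x x.
Proof. by exists [::]. Qed.

Lemma reach_trans x y z : reach x y -> reach y z -> reach x z.
Proof. by move=> [ops1 h1] [ops2 h2]; exists (ops1 ++ ops2); rewrite run_cat h1. Qed.

Lemma reach_step op x y : step 2 op x = Some y -> reach x y.
Proof. by move=> h; exists [:: op] => /=; rewrite h. Qed.

Lemma reach_ind (P : config -> Prop) x y :
  (forall op x y, P x -> step 2 op x = Some y -> P y) -> P x -> reach x y -> P y.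
Proof.
move=> closed + [ops]; elim: ops x => [|op ops IH] x Px /=; first by case=> <-.
by case E: (step 2 op x) => [x'|] // /IH; apply; apply: closed E.
Qed.

Lemma reach_d0 z i a b c o :
  pushable gtn z a -> reach (cfg (z :: i) a b c o) (cfg i (z :: a) b c o).
Proof. by move=> za; apply: (@reach_step 0); rewrite step2E /= za. Qed.

Lemma reach_d1 z i a b c o :
  pushable gtn z b -> reach (cfg i (z :: a) b c o) (cfg i a (z :: b) c o).
Proof. by move=> zb; apply: (@reach_step 1); rewrite step2E /= zb. Qed.

Lemma reach_d2 z i a b c o :
  pushable ltn z c -> reach (cfg i a (z :: b) c o) (cfg i a b (z :: c) o).
Proof. by move=> zc; apply: (@reach_step 2); rewrite step2E /= zc. Qed.

Lemma pushable_ltn_mono z z' s : z' <= z -> pushable ltn z s -> pushable ltn z' s.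
Proof. by case: s => //= h s z'z; apply: leq_ltn_trans. Qed.

Lemma pushable_gtn_mono z z' s : z <= z' -> pushable gtn z s -> pushable gtn z' s.
Proof. by case: s => //= h s zz' hz; apply: leq_trans hz zz'. Qed.

(* Writing the top as [m.+1 + u] lets runs that compare it only with entries
   [<= m] be checked by computation. *)
Lemma pushable_ltnP m s : pushable ltn m s -> s = [::] \/ exists u s', s = (m.+1 + u) :: s'.
Proof. by case: s => [|h s] /=; [left | move/subnKC <-; right; exists (h - m.+1), s]. Qed.

Lemma sortableP s :
  sortable 2 s <-> reach (cfg s [::] [::] [::] [::]) (cfg [::] [::] [::] [::] (sort leq s)).
Proof. by []. Qed.

Definition wf (s : seq nat) (x : config) : Prop :=
  if x is Config i [:: a; b; c] o then
    [/\ suffix i s, perm_eq (i ++ a ++ b ++ c ++ o) s,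
        sorted gtn a, sorted gtn b & sorted ltn c]
  else False.

Lemma sorted_push (r : rel nat) z s :
  pushable r z s -> sorted r s -> sorted r (z :: s).
Proof. by case: s => //= h s -> ->. Qed.

Ltac perm_by_count := apply/permP => q; rewrite -?cats1 ?count_cat /=; lia.

Lemma wf_step s op x y : wf s x -> step 2 op x = Some y -> wf s y.
Proof.
case: x => i [|a [|b [|c [|??]]]] o //; rewrite step2E.
case=> si perm_s sa sb sc; case: op => [|[|[|[|op]]]] //=.
- case: i si perm_s => // z i' si perm_s; case: ifP => // za [<-]; split=> //.
  + by apply: suffix_trans si; apply: suffix_cons.
  + by apply: perm_trans perm_s; perm_by_count.
  + exact: sorted_push.
- case: a sa perm_s => // z a' sa perm_s; case: ifP => // zb [<-]; split=> //.
  + by apply: perm_trans perm_s; perm_by_count.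
  + exact: path_sorted sa.
  + exact: sorted_push.
- case: b sb perm_s => // z b' sb perm_s; case: ifP => // zc [<-]; split=> //.
  + by apply: perm_trans perm_s; perm_by_count.
  + exact: path_sorted sb.
  + exact: sorted_push.
- case: c sc perm_s => // z c' sc perm_s [<-]; split=> //.
  + by apply: perm_trans perm_s; perm_by_count.
  + exact: path_sorted sc.
Qed.

Lemma wf_init s : wf s (cfg s [::] [::] [::] [::]).
Proof. by split=> //; [apply: suffix_refl | rewrite !cats0]. Qed.

Lemma wf_reach s x y : wf s x -> reach x y -> wf s y.
Proof. exact: reach_ind (@wf_step s). Qed.

Lemma reach_pop_all c o : reach (cfg [::] [::] [::] c o) (cfg [::] [::] [::] [::] (o ++ c)).
Proof.
elim: c o => [|z c IH] o; first by rewrite cats0; apply: reach_refl.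
by rewrite -cat_rcons; apply: reach_trans (IH _); apply: (@reach_step 3).
Qed.

Lemma sort_leq_eq u s : sorted leq u -> perm_eq u s -> sort leq s = u.
Proof.
move=> su /(perm_sortP leq_total leq_trans anti_leq) <-.
exact: sorted_sort leq_trans _ su.
Qed.

Lemma sortable_of_reach s c o :
  reach (cfg s [::] [::] [::] [::]) (cfg [::] [::] [::] c o) ->
  (sorted ltn c -> sorted ltn (o ++ c)) -> sortable 2 s.
Proof.
move=> r_sc sorted_oc; have [_ perm_s _ _ sc] := wf_reach (wf_init s) r_sc.
apply/sortableP; rewrite (@sort_leq_eq (o ++ c)).
- exact: reach_trans r_sc (reach_pop_all c o).
- by apply: sub_sorted (sorted_oc sc) => u v /ltnW.
- by apply: perm_trans perm_s; rewrite perm_catC.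
Qed.

(** * Sort_2 is a permutation class *)

Lemma gtn_trans : transitive gtn.
Proof. by move=> y x z /= xy yz; apply: ltn_trans xy. Qed.

Lemma all_pushable (r : rel nat) z l :
  transitive r -> sorted r l -> pushable r z l -> all (r z) l.
Proof.
case: l => //= h l tr shl zh; rewrite zh /=.
by apply: sub_all (order_path_min tr shl) => w; apply: tr.
Qed.

Section Pattern.
Variables (t p : seq nat).
Hypothesis t_iso : order_iso t p.

Definition rename (v : nat) : nat := nth 0 p (index v t).
Definition restrict (l : seq nat) : seq nat := map rename (filter (mem t) l).
Definition restrict_cfg (x : config) : config :=
  Config (restrict (inp x)) (map restrict (stks x)) (restrict (out x)).

Lemma restrict_cfgE i a b c o :
  restrict_cfg (cfg i a b c o) =
  cfg (restrict i) (restrict a) (restrict b) (restrict c) (restrict o).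
Proof. by []. Qed.

Lemma rename_ltn : {in t &, {mono rename : u v / u < v}}.
Proof.
move=> u v ut vt; case: t_iso => _ iso.
by rewrite /rename -iso ?index_mem // !nth_index.
Qed.

Lemma rename_gtn : {in t &, {mono rename : u v / gtn u v}}.
Proof. by move=> u v ut vt; apply: rename_ltn. Qed.

Lemma restrict_cons z l :
  restrict (z :: l) = if z \in t then rename z :: restrict l else restrict l.
Proof. by rewrite /restrict /=; case: ifP. Qed.

Lemma restrict_rcons l z :
  restrict (rcons l z) = if z \in t then rcons (restrict l) (rename z) else restrict l.
Proof. by rewrite /restrict filter_rcons -[mem t z]/(z \in t); case: ifP; rewrite ?map_rcons. Qed.

Lemma pushable_restrict (r : rel nat) z l :
  {in t &, {mono rename : u v / r u v}} -> z \in t -> all (r z) l ->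
  pushable r (rename z) (restrict l).
Proof.
move=> mono zt; elim: l => //= w l IH /andP [zw /IH]; rewrite restrict_cons.
by case: ifP => //= wt _; rewrite mono.
Qed.

(* A move of an entry outside [t] is erased; any other move stays legal since
   the entries of [t] below the top of a sorted stack lie beyond that top. *)
Lemma restrict_step s op x y : wf s x -> step 2 op x = Some y ->
  restrict_cfg y = restrict_cfg x \/ step 2 op (restrict_cfg x) = Some (restrict_cfg y).
Proof.
case: x => i [|a [|b [|c [|??]]]] o //; rewrite step2E => -[_ _ sa sb sc].
case: op => [|[|[|[|op]]]] //=.
- case: i => // z i'; case: ifP => // za [<-]; rewrite !restrict_cfgE !restrict_cons.
  case: ifP => zt; [right | by left].
  rewrite step2E /step2 pushable_restrict //; first exact: rename_gtn.
  exact: all_pushable gtn_trans sa za.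
- case: a sa => // z a' _; case: ifP => // zb [<-]; rewrite !restrict_cfgE !restrict_cons.
  case: ifP => zt; [right | by left].
  rewrite step2E /step2 pushable_restrict //; first exact: rename_gtn.
  exact: all_pushable gtn_trans sb zb.
- case: b sb => // z b' _; case: ifP => // zc [<-]; rewrite !restrict_cfgE !restrict_cons.
  case: ifP => zt; [right | by left].
  rewrite step2E /step2 pushable_restrict //; first exact: rename_ltn.
  exact: all_pushable ltn_trans sc zc.
- case: c sc => // z c' _ [<-]; rewrite !restrict_cfgE restrict_cons restrict_rcons.
  by case: ifP => zt; [right | left].
Qed.

Lemma reach_restrict s x y : wf s x -> reach x y -> reach (restrict_cfg x) (restrict_cfg y).
Proof.
move=> wx r; suff [] : wf s y /\ reach (restrict_cfg x) (restrict_cfg y) by [].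
apply: (@reach_ind (fun z => wf s z /\ reach (restrict_cfg x) (restrict_cfg z)) x y _ _ r);
  last by split; last apply: reach_refl.
move=> op y1 y2 [wy1 r1] e; split; first exact: wf_step e.
by case: (restrict_step wy1 e) => [-> // | /reach_step]; apply: reach_trans.
Qed.

Lemma restrict_of_subseq s : uniq s -> subseq t s -> restrict s = p.
Proof.
move=> us /(subseq_uniqP us) ts; rewrite /restrict -ts; have [size_tp _] := t_iso.
apply: (@eq_from_nth _ 0); rewrite size_map // => k kt.
by rewrite (nth_map 0) // /rename index_uniq // ts filter_uniq.
Qed.

Lemma sortable_pattern s : uniq s -> subseq t s -> sortable 2 s -> sortable 2 p.
Proof.
move=> us ts /sortableP r_s; apply/sortableP.
have := reach_restrict (wf_init s) r_s; rewrite /restrict_cfg /= restrict_of_subseq //.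
suff -> : sort leq p = restrict (sort leq s) by [].
apply: sort_leq_eq.
- rewrite /restrict; apply: (homo_sorted_in (P := mem t) (e := leq)).
  + move=> u v ut vt; rewrite leq_eqVlt => /orP [/eqP -> // | uv].
    by apply: ltnW; rewrite rename_ltn.
  + by apply/allP => v; rewrite mem_filter => /andP [].
  + by apply: sorted_filter; [exact: leq_trans | exact: sort_sorted leq_total s].
- by rewrite -(restrict_of_subseq us ts); apply/perm_map/perm_filter; rewrite perm_sort.
Qed.

End Pattern.

(** * The permutations [alpha j] *)

Definition omega_seg (n d : nat) : seq nat :=
  flatten [seq [:: 2 * k + 2; 2 * k + 5] | k <- rev (iota n.+1 d)].

Lemma omega_segS n d :
  omega_seg n d.+1 = 2 * (n + d) + 4 :: 2 * (n + d) + 7 :: omega_seg n d.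
Proof.
rewrite /omega_seg -[d.+1]addn1 iotaD rev_cat /=.
by congr (_ :: _ :: _); lia.
Qed.

Lemma omega_cat n d : omega (n + d) = omega_seg n d ++ omega n.
Proof.
by rewrite /omega /omega_seg (iotaD 1) rev_cat map_cat flatten_cat add1n.
Qed.

Lemma omegaS n : omega n.+1 = 2 * n + 4 :: 2 * n + 7 :: omega n.
Proof. by rewrite -addn1 omega_cat omega_segS addn0. Qed.

Lemma mem_omega n v :
  v \in omega n -> exists2 k, 0 < k <= n & (v = 2 * k + 2) \/ (v = 2 * k + 5).
Proof.
elim: n => // n IH; rewrite omegaS !inE => /or3P [/eqP -> | /eqP -> | /IH [k kn vk]].
- by exists n.+1; [| left]; lia.
- by exists n.+1; [| right]; lia.
- by exists k; [lia |].
Qed.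

Definition alpha_tail (n : nat) : seq nat := omega n ++ [:: 1; 5; 2].

Lemma alpha_tailS n : alpha_tail n.+1 = 2 * n + 4 :: 2 * n + 7 :: alpha_tail n.
Proof. by rewrite /alpha_tail omegaS. Qed.

Lemma alphaE j : alpha j = 2 * j + 4 :: 3 :: alpha_tail j.
Proof. by []. Qed.

Lemma perm_alpha j : perm_eq (alpha j) (iota 1 (2 * j + 5)).
Proof.
elim: j => // j IH.
have -> : 2 * j.+1 + 5 = (2 * j + 5) + 2 by lia.
rewrite iotaD (_ : iota (1 + (2 * j + 5)) 2 = [:: 2 * j + 6; 2 * j + 7]); last first.
  by rewrite /=; congr [:: _; _]; lia.
apply: (@perm_trans _ (2 * j + 6 :: 2 * j + 7 :: alpha j)).
  rewrite !alphaE alpha_tailS (_ : 2 * j.+1 + 4 = 2 * j + 6); last lia.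
  by apply/permP => q /=; lia.
by rewrite perm_sym perm_catC /= !perm_cons perm_sym.
Qed.

Lemma size_alpha j : size (alpha j) = 2 * j + 5.
Proof. by rewrite (perm_size (perm_alpha j)) size_iota. Qed.

Lemma is_perm_alpha j : is_perm (alpha j).
Proof. by rewrite /is_perm size_alpha perm_alpha. Qed.

Lemma uniq_alpha j : uniq (alpha j).
Proof. by rewrite (perm_uniq (perm_alpha j)) iota_uniq. Qed.

Lemma sort_perm s : is_perm s -> sort leq s = iota 1 (size s).
Proof. by move=> ps; apply: sort_leq_eq; [apply: iota_sorted | rewrite perm_sym]. Qed.

(** * [alpha j] is not 2-sortable *)

(* [v] occurs in [s] no earlier than [u] (vacuous if [u] does not occur). *)
Definition before (s : seq nat) (u v : nat) : Prop :=
  forall n, u \in drop n s -> v \in drop n s.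

Lemma before_suffix s r u v : before s u v -> suffix r s -> u \in r -> v \in r.
Proof. by move=> uv; rewrite suffixE => /eqP <-; apply: uv. Qed.

Lemma before_catl x y u v : u \notin y -> v \in y -> before (x ++ y) u v.
Proof.
move=> uy vy n; rewrite !drop_cat; case: ltnP => _; last by move/mem_drop; rewrite (negPf uy).
by rewrite !mem_cat vy orbT.
Qed.

Lemma before_catr x y u v : u \in y -> before y u v -> before (x ++ y) u v.
Proof.
move=> uy uv n; rewrite !drop_cat; case: ltnP => _; last exact: uv.
by have := uv 0; rewrite drop0 !mem_cat => /(_ uy) ->; rewrite orbT.
Qed.

Lemma iota_rcons o z : rcons o z = iota 1 (size (rcons o z)) ->
  o = iota 1 (size o) /\ z = (size o).+1.
Proof.
rewrite size_rcons -[(size o).+1]addn1 iotaD cats1 add1n => /rcons_inj [o_iota ->].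
by rewrite addn1.
Qed.

(* [w] in [I] can leave only after the smaller [v]; the larger [y] cannot enter
   [I] before [w] leaves, yet [y] precedes [v] in [s], so [v] can never pass [y]
   in the decreasing stacks.  Such a configuration can no longer be sorted. *)
Definition blocked (s : seq nat) (v w y : nat) (a b c o : seq nat) : Prop :=
  [/\ 0 < v < w, w < y, w \in c, y \notin c ++ o &
      [/\ v \notin b ++ c ++ o, v \in a -> y \in b, y \in s & before s y v]].

Definition doomed (s : seq nat) (x : config) : Prop :=
  if x is Config _ [:: a; b; c] o then
    o <> iota 1 (size o) \/ exists v w y, blocked s v w y a b c o
  else False.

Lemma preceding_in_D2 s i a b c o v y : uniq s -> wf s (cfg (v :: i) a b c o) ->
  pushable gtn v a -> v < y -> y \in s -> y \notin c ++ o -> before s y v -> y \in b.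
Proof.
move=> us [si perm_s sa _ _] va vy ys yco yv.
have U : uniq ((v :: i) ++ a ++ b ++ c ++ o) by rewrite (perm_uniq perm_s).
have yi : y \in (v :: i) ++ a ++ b ++ c ++ o by rewrite (perm_mem perm_s).
have yi' : y \notin i.
  apply/negP => /(before_suffix yv (suffix_trans (suffix_cons i v) si)) vi.
  by move: U; rewrite /= mem_cat vi.
have ya : y \notin a.
  by apply/negP => /(allP (all_pushable gtn_trans sa va)) /=; clear -vy; lia.
move: yi yco; rewrite !mem_cat inE (negPf yi') (negPf ya) (gtn_eqF vy) /=.
by case/or3P => [// | yc | yo]; rewrite ?yc ?yo ?orbT.
Qed.

Lemma blocked_step s op i a b c o x v w y : uniq s -> wf s (cfg i a b c o) ->
  blocked s v w y a b c o -> step2 op i a b c o = Some x -> doomed s x.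
Proof.
move=> us [si perm_s sa sb sc] [vw wy wc yco [vbco va_yb ys yv]].
have vy : v < y by clear -vw wy; lia.
case: op => [|[|[|[|op]]]] //=.
- case: i si perm_s => // z i' si perm_s; case: ifP => // za [<-].
  right; exists v, w, y.
  split=> //; split=> //; rewrite inE => /predU1P [vz | /va_yb //]; subst z.
  exact: (@preceding_in_D2 s i' a b c o v y).
- case: a {perm_s} sa va_yb => // z a' sa va_yb; case: ifP => // zb [<-].
  right; exists v, w, y.
  have yb : {in b, forall u, u < z} := allP (all_pushable gtn_trans sb zb).
  have zv : z != v.
    by apply/eqP => zv; subst z; have := yb _ (va_yb (mem_head _ _)); clear -vy; lia.
  split=> //; split=> //.
  + by move: vbco; rewrite !mem_cat !inE; clear -zv; lia.
  + by move=> va'; rewrite inE va_yb ?orbT // inE va' orbT.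
- case: b {perm_s sb} vbco va_yb => // z b' vbco va_yb; case: ifP => // zc [<-].
  right; exists v, w, y.
  have zw : z < w := allP (all_pushable ltn_trans sc zc) _ wc.
  have yz : y != z by clear -zw wy; lia.
  split; rewrite ?inE ?wc ?orbT //; first by move: yco; rewrite !mem_cat (negPf yz).
  split=> // [|/va_yb]; last by rewrite inE (negPf yz).
  by move: vbco; rewrite !mem_cat !inE; clear; lia.
- case: c {perm_s sc} wc yco vbco => // z c' wc yco vbco [<-]; case: (eqVneq z w) => [zw | zw].
    left => /iota_rcons [o_iota z_size]; move: vbco.
    by rewrite o_iota !mem_cat mem_iota; clear -vw z_size zw; lia.
  have pop u : (u \in c' ++ rcons o z) = (u \in (z :: c') ++ o).
    by rewrite !mem_cat mem_rcons !inE orbCA orbA.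
  right; exists v, w, y; split; rewrite ?pop //; last by rewrite mem_cat pop -mem_cat.
  by move: wc; rewrite inE eq_sym (negPf zw).
Qed.

Lemma doomed_step s op x y :
  uniq s -> wf s x -> doomed s x -> step 2 op x = Some y -> doomed s y.
Proof.
case: x => i [|a [|b [|c [|??]]]] o //; rewrite step2E => us wx.
case=> [not_iota | [v [w [y' blocked_w]]]]; last exact: blocked_step us wx blocked_w.
case: op => [|[|[|[|op]]]] //=.
- by case: i {wx} => // z i'; case: ifP => // _ [<-]; left.
- by case: a {wx} => // z a'; case: ifP => // _ [<-]; left.
- by case: b {wx} => // z b'; case: ifP => // _ [<-]; left.
- by case: c {wx} => // z c' [<-]; left => /iota_rcons [].
Qed.

Lemma not_doomed_sorted s : is_perm s -> ~ doomed s (cfg [::] [::] [::] [::] (sort leq s)).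
Proof.
move=> ps [|[v [w [y [_ _]]]]] //.
by rewrite (sort_perm ps) size_iota.
Qed.

Lemma mem_omega_odd n k : 0 < k <= n -> 2 * k + 5 \in omega n.
Proof.
elim: n => [|n IH] kn; first lia.
rewrite omegaS !inE; case: (ltnP k n.+1) => [kn' | nk]; first by rewrite IH ?orbT //; lia.
by rewrite (_ : k = n.+1) ?eqxx ?orbT //; lia.
Qed.

Lemma alpha_tail_cons n : exists w r, alpha_tail n = w :: r /\ w <= 2 * n + 2.
Proof.
case: n => [|n]; first by exists 1, [:: 5; 2].
by rewrite alpha_tailS; exists (2 * n + 4), (2 * n + 7 :: alpha_tail n); split; last lia.
Qed.

Lemma alpha_cat j : alpha j = (2 * j + 4 :: 3 :: omega j) ++ [:: 1; 5; 2].
Proof. by rewrite /alpha catA. Qed.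

Lemma before_alpha_odd j k : 0 < k <= j -> before (alpha j) (2 * k + 5) 5.
Proof. by move=> kj; rewrite alpha_cat; apply: before_catl; rewrite ?inE //; lia. Qed.

Lemma before_alpha_5_2 j : before (alpha j) 5 2.
Proof. by rewrite alpha_cat; apply: before_catr => // -[|[|[|n]]]. Qed.

Lemma mem_alpha_odd j k : 0 < k <= j -> 2 * k + 5 \in alpha j.
Proof. by move=> kj; rewrite alpha_cat mem_cat !inE mem_omega_odd ?orbT. Qed.

Lemma doomed_of_blocked s i a b c v w y :
  0 < v < w -> w < y -> w \in c -> y \notin c -> v \notin a ++ b ++ c -> y \in s ->
  before s y v -> doomed s (cfg i a b c [::]).
Proof.
move=> vw wy wc yc vabc ys yv; right; exists v, w, y; split; rewrite ?cats0 //.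
split=> // [|va]; first by move: vabc; rewrite mem_cat negb_or => /andP [].
by move: vabc; rewrite mem_cat va.
Qed.

Lemma doomed_pop s i a b c y : step2 3 i a b c [::] = Some y -> 1 \notin c -> doomed s y.
Proof. by case: c => //= z c [<-]; rewrite inE => z1; left => -[z_1]; rewrite z_1 in z1. Qed.

Section NotSortable.
Variable j : nat.

Definition upper (m : nat) : seq nat := iota m (2 * j + 6 - m).

Lemma mem_upper v m : (v \in upper m) = (m <= v <= 2 * j + 5).
Proof. by rewrite mem_iota; lia. Qed.

Lemma upper_cons m : m <= 2 * j + 5 -> upper m = m :: upper m.+1.
Proof.
by move=> m_le; rewrite /upper -[2 * j + 6 - m]prednK /=; [congr (_ :: iota _ _) | ]; lia.
Qed.

Lemma pushable_upper z m : z < m -> pushable ltn z (upper m).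
Proof.
move=> zm; case: (leqP m (2 * j + 5)) => [m_le | m_gt]; first by rewrite upper_cons.
by rewrite /upper (_ : 2 * j + 6 - m = 0) //; lia.
Qed.

Lemma doomed_5 i a b c w k : 0 < k <= j -> 5 < w < 2 * k + 5 -> w \in c ->
  2 * k + 5 \notin c -> 5 \notin a ++ b ++ c -> doomed (alpha j) (cfg i a b c [::]).
Proof.
move=> kj wk wc kc abc; apply: (@doomed_of_blocked _ i a b c 5 w (2 * k + 5)) => //.
- by clear -wk; lia.
- by clear -wk; lia.
- exact: mem_alpha_odd.
- exact: before_alpha_odd.
Qed.

Lemma doomed_2 i a b c : 4 \in c -> 5 \notin c -> 2 \notin a ++ b ++ c ->
  doomed (alpha j) (cfg i a b c [::]).
Proof.
move=> c4 c5 abc; apply: (@doomed_of_blocked _ i a b c 2 4 5) => //.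
- by rewrite alpha_cat mem_cat !inE orbT.
- exact: before_alpha_5_2.
Qed.

(* The configurations reachable from [alpha j] that are not yet [doomed]; from
   each of them at most one legal move avoids doom, and the path they form
   stops at [ready 0], with input [1; 5; 2]. *)
Definition ready (n : nat) : config :=
  cfg (alpha_tail n) [:: 3] [:: 2 * n + 4] (upper (2 * n + 6)) [::].

Definition in_pair (n : nat) (x : config) : Prop :=
  x = cfg (2 * n + 7 :: alpha_tail n) [:: 2 * n + 4; 3] [:: 2 * n + 6]
          (upper (2 * n + 8)) [::] \/
  x = cfg (alpha_tail n) [:: 2 * n + 7; 2 * n + 4; 3] [:: 2 * n + 6]
          (upper (2 * n + 8)) [::] \/
  x = cfg (alpha_tail n) [:: 2 * n + 4; 3] [:: 2 * n + 7; 2 * n + 6]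
          (upper (2 * n + 8)) [::] \/
  x = cfg (alpha_tail n) [:: 2 * n + 4; 3] [:: 2 * n + 6] (upper (2 * n + 7)) [::] \/
  x = cfg (alpha_tail n) [:: 2 * n + 4; 3] [::] (upper (2 * n + 6)) [::].

Definition start (x : config) : Prop :=
  [\/ x = cfg (alpha j) [::] [::] [::] [::],
      x = cfg (3 :: alpha_tail j) [:: 2 * j + 4] [::] [::] [::] |
      x = cfg (3 :: alpha_tail j) [::] [:: 2 * j + 4] [::] [::]].

Definition live (x : config) : Prop :=
  [\/ start x, exists2 n, n <= j & x = ready n | exists2 n, n < j & in_pair n x].

Lemma start_step op x y : start x -> step 2 op x = Some y -> live y \/ doomed (alpha j) y.
Proof.
case=> ->; rewrite step2E; case: op => [|[|[|[|op]]]] //=.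
- by case=> <-; left; apply/Or31/Or32.
- by case: ifP => //; lia.
- by case=> <-; left; apply/Or31/Or33.
- by case=> <-; left; apply: Or32; exists j; rewrite // /ready /upper subnn.
- case=> <-; right; case: (posnP j) => [j0 | j_pos]; first by apply: doomed_2; rewrite j0.
  by apply: (@doomed_5 _ _ _ _ (2 * j + 4) j); rewrite ?inE //; lia.
Qed.

Lemma pop_upper_step m i a b y : 1 < m -> step 2 3 (cfg i a b (upper m) [::]) = Some y ->
  live y \/ doomed (alpha j) y.
Proof.
by move=> m1; rewrite step2E => /doomed_pop pop; right; apply: pop; rewrite mem_upper; lia.
Qed.

Lemma ready_step n op y : n <= j -> step 2 op (ready n) = Some y -> live y \/ doomed (alpha j) y.
Proof.
move=> nj; case: op => [|[|[|[|op]]]]; last (by rewrite step2E);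
  last by apply: pop_upper_step; lia.
all: rewrite step2E /=.
- case: n nj => [|n] nj //; rewrite alpha_tailS /=; case: ifP => // _ [<-].
  have -> : 2 * n.+1 + 4 = 2 * n + 6 by lia.
  have -> : 2 * n.+1 + 6 = 2 * n + 8 by lia.
  by left; apply: Or33; exists n => //; left.
- by case: ifP => //; lia.
- rewrite pushable_upper; last lia.
  case=> <-; right; case: n nj => [|n] nj; first by apply: doomed_2; rewrite ?inE ?mem_upper; lia.
  by apply: (@doomed_5 _ _ _ _ (2 * n.+1 + 4) n.+1); rewrite ?inE ?mem_upper; lia.
Qed.

Lemma in_pair_step n op x y : n < j -> in_pair n x -> step 2 op x = Some y ->
  live y \/ doomed (alpha j) y.
Proof.
move=> nj; have [w [r [tail_n w_le]]] := alpha_tail_cons n.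
have doomed_6 i a b : 5 \notin a ++ b ->
    doomed (alpha j) (cfg i a b (2 * n + 6 :: upper (2 * n + 8)) [::]).
  move=> ab; apply: (@doomed_5 _ _ _ _ (2 * n + 6) n.+1); rewrite ?inE ?mem_upper //; try lia.
  by move: ab; rewrite !mem_cat inE mem_upper; lia.
have upper_6 : upper (2 * n + 6) = 2 * n + 6 :: upper (2 * n + 7).
  by rewrite upper_cons; [congr (_ :: upper _) | ]; lia.
have upper_7 : upper (2 * n + 7) = 2 * n + 7 :: upper (2 * n + 8).
  by rewrite upper_cons; [congr (_ :: upper _) | ]; lia.
have pair_live z : in_pair n z -> live z by move=> zn; apply: Or33; exists n.
case=> [|[|[|[|]]]] ->; case: op => [|[|[|[|op]]]];
  rewrite ?step2E //=; try (by apply: pop_upper_step; lia);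
  try (by rewrite tail_n /=; case: ifP => //; lia); try (by case: ifP => //; lia).
(* what remains are the legal moves *)
- by rewrite ifT; [case=> <-; left; apply: pair_live; right; left | lia].
- rewrite pushable_upper; last lia.
  by case=> <-; right; apply: doomed_6; rewrite cats0 !inE; lia.
- by rewrite ifT; [case=> <-; left; apply: pair_live; do 2 right; left | lia].
- rewrite pushable_upper; last lia.
  by case=> <-; right; apply: doomed_6; rewrite cats0 !inE; lia.
- rewrite pushable_upper -?upper_7; last lia.
  by case=> <-; left; apply: pair_live; do 3 right; left.
- rewrite pushable_upper -?upper_6; last lia.
  by case=> <-; left; apply: pair_live; do 4 right.
- by case=> <-; left; apply: Or32; exists n; [apply: ltnW | ].
Qed.

Lemma live_step op x y : live x -> step 2 op x = Some y -> live y \/ doomed (alpha j) y.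
Proof.
case=> [xs | [n nj ->] | [n nj xn]];
  [exact: start_step | exact: ready_step | exact: in_pair_step xn].
Qed.

Lemma live_input x : live x -> inp x <> [::].
Proof.
have tail_nil n : alpha_tail n <> [::] by case: (alpha_tail_cons n) => w [r [-> _]].
by case=> [[] | [n _] | [n _ [|[|[|[|]]]]]] -> //=; apply: tail_nil.
Qed.

Theorem alpha_not_sortable : ~ sortable 2 (alpha j).
Proof.
move/sortableP => r.
pose inv x := wf (alpha j) x /\ (live x \/ doomed (alpha j) x).
have inv_step op x y : inv x -> step 2 op x = Some y -> inv y.
  move=> [wx lx] e; split; first exact: wf_step e.
  case: lx => [lx | dx]; first exact: live_step lx e.
  by right; apply: doomed_step (uniq_alpha j) wx dx e.
have inv_init : inv (cfg (alpha j) [::] [::] [::] [::]).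
  by split; [apply: wf_init | left; apply/Or31/Or31].
have [_ [/live_input // | ]] := reach_ind inv_step inv_init r.
exact: not_doomed_sorted (is_perm_alpha j).
Qed.

End NotSortable.

(** * Deleting an entry of [alpha j] makes it 2-sortable *)

Definition can_finish (x : config) : Prop := exists c, reach x (cfg [::] [::] [::] c [::]).

Lemma can_finish_reach x y : reach x y -> can_finish y -> can_finish x.
Proof. by move=> xy [c yc]; exists c; apply: reach_trans yc. Qed.

Lemma sortable_of_finish s : can_finish (cfg s [::] [::] [::] [::]) -> sortable 2 s.
Proof. by case=> c r; apply: sortable_of_reach r _. Qed.

Lemma pair_step k r P Q I o :
  pushable gtn (2 * k + 2) P -> pushable gtn (2 * k + 2) Q -> pushable ltn (2 * k + 5) I ->
  reach (cfg (2 * k + 2 :: 2 * k + 5 :: r) P (2 * k + 4 :: Q) I o)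
        (cfg r P (2 * k + 2 :: Q) (2 * k + 4 :: 2 * k + 5 :: I) o).
Proof.
move=> hP hQ hI.
apply: reach_trans; first exact: reach_d0.
apply: reach_trans; first by apply: reach_d0 => /=; lia.
apply: reach_trans; first by apply: reach_d1 => /=; lia.
apply: reach_trans; first exact: reach_d2.
apply: reach_trans; first by apply: reach_d2 => /=; lia.
exact: reach_d1.
Qed.

Lemma pairs_step n d r P Q I o :
  pushable gtn (2 * n + 4) P -> pushable gtn (2 * n + 4) Q -> pushable ltn (2 * (n + d) + 5) I ->
  exists2 I', pushable ltn (2 * n + 5) I' &
    reach (cfg (omega_seg n d ++ r) P (2 * (n + d) + 4 :: Q) I o) (cfg r P (2 * n + 4 :: Q) I' o).
Proof.
move=> hP hQ; elim: d I => [|d IH] I hI.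
  by exists I; rewrite addn0 in hI * => //; apply: reach_refl.
have [|I' hI' r_I'] := IH (2 * (n + d) + 6 :: 2 * (n + d) + 7 :: I); first by rewrite /=; lia.
exists I' => //; apply: reach_trans r_I'.
have := @pair_step (n + d).+1 (omega_seg n d ++ r) P Q I o.
rewrite omega_segS (_ : 2 * (n + d.+1) + 4 = 2 * (n + d).+1 + 4); last lia.
rewrite (_ : 2 * (n + d) + 4 = 2 * (n + d).+1 + 2); last lia.
rewrite (_ : 2 * (n + d) + 6 = 2 * (n + d).+1 + 4); last lia.
rewrite (_ : 2 * (n + d) + 7 = 2 * (n + d).+1 + 5); last lia.
apply; [apply: pushable_gtn_mono hP | apply: pushable_gtn_mono hQ |
        apply: pushable_ltn_mono hI]; lia.
Qed.

Lemma finish_152_43 I : pushable ltn 5 I -> can_finish (cfg [:: 1; 5; 2] [::] [:: 4; 3] I [::]).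
Proof.
move=> I5; exists [:: 1, 2, 3, 4, 5 & I]; exists [:: 0; 0; 1; 0; 2; 2; 2; 1; 2; 1; 2].
by case/pushable_ltnP: I5 => [-> | [u [I' ->]]].
Qed.

Lemma finish_152_4 I : pushable ltn 5 I -> can_finish (cfg [:: 1; 5; 2] [::] [:: 4] I [::]).
Proof.
move=> I5; exists [:: 1, 2, 4, 5 & I]; exists [:: 0; 0; 1; 0; 2; 2; 1; 2; 1; 2].
by case/pushable_ltnP: I5 => [-> | [u [I' ->]]].
Qed.

Lemma finish_152_3 I : pushable ltn 5 I -> can_finish (cfg [:: 1; 5; 2] [::] [:: 3] I [::]).
Proof.
move=> I5; exists [:: 1, 2, 3, 5 & I]; exists [:: 0; 0; 1; 0; 2; 2; 1; 2; 1; 2].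
by case/pushable_ltnP: I5 => [-> | [u [I' ->]]].
Qed.

Lemma finish_tail_4 n Q I : (Q = [::] \/ Q = [:: 3]) -> pushable ltn (2 * n + 5) I ->
  can_finish (cfg (alpha_tail n) [::] (2 * n + 4 :: Q) I [::]).
Proof.
move=> hQ hI; have Q4 : pushable gtn 4 Q by case: hQ => ->.
have [|I' hI' r_I'] := @pairs_step 0 n [:: 1; 5; 2] [::] Q I [::] isT Q4; first by rewrite add0n.
rewrite /alpha_tail -[n]/(0 + n) omega_cat cats0; apply: (can_finish_reach r_I').
by case: hQ => ->; [apply: finish_152_4 | apply: finish_152_43].
Qed.

Lemma finish_tail_3 n I : pushable ltn (2 * n + 5) I ->
  can_finish (cfg (alpha_tail n) [::] [:: 3] I [::]).
Proof.
case: n => [|n] hI; first exact: finish_152_3.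
rewrite alpha_tailS.
apply: (can_finish_reach (y := cfg (alpha_tail n) [::] [:: 2 * n + 4; 3] (2 * n + 7 :: I) [::])).
  apply: reach_trans; first exact: reach_d0.
  apply: reach_trans; first by apply: reach_d0 => /=; lia.
  apply: reach_trans; first by apply: reach_d1 => /=; lia.
  apply: reach_trans; first by apply: reach_d2; apply: pushable_ltn_mono hI; lia.
  by apply: reach_d1 => /=; lia.
by apply: finish_tail_4; [right | rewrite /=; lia].
Qed.

Lemma finish_52 I : pushable ltn 5 I -> can_finish (cfg [:: 5; 2] [:: 3] [:: 4] I [::]).
Proof.
move=> I5; exists [:: 2, 3, 4, 5 & I]; exists [:: 0; 1; 2; 2; 1; 2; 0; 1; 2].
by case/pushable_ltnP: I5 => [-> | [u [I' ->]]].
Qed.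

Lemma finish_12 I : pushable ltn 5 I -> can_finish (cfg [:: 1; 2] [:: 3] [:: 4] I [::]).
Proof.
move=> I5; exists [:: 1, 2, 3, 4 & I]; exists [:: 2; 1; 0; 0; 2; 1; 2; 1; 2].
by case/pushable_ltnP: I5 => [-> | [u [I' ->]]].
Qed.

(* After deleting [2], the entries [1; 3; 4] have to be output before [5] enters [I]. *)
Lemma reach_15 I : pushable ltn 5 I ->
  reach (cfg [:: 1; 5] [:: 3] [:: 4] I [::]) (cfg [::] [::] [::] (5 :: I) [:: 1; 3; 4]).
Proof.
move=> I5; exists [:: 2; 1; 2; 0; 1; 2; 3; 3; 3; 0; 1; 2].
by case/pushable_ltnP: I5 => [-> | [u [I' ->]]].
Qed.

Lemma rem_cat_notin (T : eqType) (x : T) (p q : seq T) :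
  uniq (p ++ q) -> x \in q -> rem x (p ++ q) = p ++ rem x q.
Proof.
elim: p => //= y p IH /andP [ypq upq] xq; rewrite IH //.
by case: eqP ypq => // ->; rewrite mem_cat xq orbT.
Qed.

Lemma alpha_split j n : n <= j ->
  alpha j = (2 * j + 4 :: 3 :: omega_seg n (j - n)) ++ alpha_tail n.
Proof.
move=> nj; have omega_j : omega j = omega_seg n (j - n) ++ omega n by rewrite -omega_cat subnKC.
by rewrite alphaE /alpha_tail omega_j catA.
Qed.

Lemma rem_alpha j n x : n <= j -> x \in alpha_tail n ->
  rem x (alpha j) = 2 * j + 4 :: 3 :: omega_seg n (j - n) ++ rem x (alpha_tail n).
Proof. by move=> nj xt; rewrite (alpha_split nj) rem_cat_notin // -(alpha_split nj) uniq_alpha. Qed.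

Lemma reach_after_pairs j n r : n <= j -> exists2 I, pushable ltn (2 * n + 5) I &
  reach (cfg (2 * j + 4 :: 3 :: omega_seg n (j - n) ++ r) [::] [::] [::] [::])
        (cfg r [:: 3] [:: 2 * n + 4] I [::]).
Proof.
move=> nj; have [|I hI r_I] := @pairs_step n (j - n) r [:: 3] [::] [::] [::] _ isT isT.
  by rewrite /=; lia.
exists I => //; rewrite subnKC // in r_I; apply: reach_trans r_I.
apply: reach_trans; first exact: reach_d0.
apply: reach_trans; first exact: reach_d1.
exact: reach_d0.
Qed.

Lemma sortable_rem_first j : sortable 2 (rem (2 * j + 4) (alpha j)).
Proof.
rewrite alphaE rem_cons eqxx; apply: sortable_of_finish.
apply: (can_finish_reach (y := cfg (alpha_tail j) [::] [:: 3] [::] [::])).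
  by apply: reach_trans; [apply: reach_d0 | apply: reach_d1].
exact: finish_tail_3.
Qed.

Lemma sortable_rem_3 j : sortable 2 (rem 3 (alpha j)).
Proof.
rewrite alphaE rem_cons ifN_eq; last by apply/eqP; lia.
rewrite rem_cons eqxx; apply: sortable_of_finish.
apply: (can_finish_reach (y := cfg (alpha_tail j) [::] [:: 2 * j + 4] [::] [::])).
  by apply: reach_trans; [apply: reach_d0 | apply: reach_d1].
by apply: finish_tail_4; [left |].
Qed.

Lemma sortable_rem_pair j n x : n < j -> x \in [:: 2 * n + 4; 2 * n + 7] ->
  sortable 2 (rem x (alpha j)).
Proof.
move=> nj xn; rewrite (@rem_alpha j n.+1) //; last first.
  by rewrite alpha_tailS; move: xn; rewrite !inE => /orP [] ->; rewrite ?orbT.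
have [I hI r_I] := reach_after_pairs (rem x (alpha_tail n.+1)) nj.
apply: sortable_of_finish; apply: (can_finish_reach r_I).
rewrite alpha_tailS (_ : 2 * n.+1 + 4 = 2 * n + 6) in hI *; last lia.
rewrite (_ : 2 * n.+1 + 5 = 2 * n + 7) in hI; last lia.
move: xn; rewrite !inE => /orP [] /eqP ->; rewrite /= eqxx ?ifN_eq; try (apply/eqP; lia).
- pose y := cfg (alpha_tail n) [::] [:: 3] (2 * n + 6 :: 2 * n + 7 :: I) [::].
  apply: (can_finish_reach (y := y)).
    apply: reach_trans; first by apply: reach_d0 => /=; lia.
    apply: reach_trans; first by apply: reach_d1 => /=; lia.
    apply: reach_trans; first exact: reach_d2.
    apply: reach_trans; first by apply: reach_d2 => /=; lia.
    exact: reach_d1.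
  by apply: finish_tail_3 => /=; lia.
- apply: (can_finish_reach (y := cfg (alpha_tail n) [::] [:: 2 * n + 4; 3] (2 * n + 6 :: I) [::])).
    apply: reach_trans; first by apply: reach_d2; apply: pushable_ltn_mono hI; lia.
    apply: reach_trans; first exact: reach_d1.
    apply: reach_trans; first exact: reach_d0.
    by apply: reach_d1 => /=; lia.
  by apply: finish_tail_4; [right | rewrite /=; lia].
Qed.

Lemma sortable_rem_end j x : x \in [:: 1; 5; 2] -> sortable 2 (rem x (alpha j)).
Proof.
move=> xe; rewrite (@rem_alpha j 0) //.
have [I hI r_I] := reach_after_pairs (rem x [:: 1; 5; 2]) (leq0n j).
move: xe r_I; rewrite !inE => /or3P [] /eqP -> r_I.
- by apply: sortable_of_finish; apply: (can_finish_reach r_I); apply: finish_52.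
- by apply: sortable_of_finish; apply: (can_finish_reach r_I); apply: finish_12.
- by apply: sortable_of_reach (reach_trans r_I (reach_15 hI)) _.
Qed.

Lemma sortable_rem_alpha j x : x \in alpha j -> sortable 2 (rem x (alpha j)).
Proof.
rewrite alphaE !inE => /predU1P [-> | /predU1P [-> | ]].
- exact: sortable_rem_first.
- exact: sortable_rem_3.
- rewrite mem_cat => /orP [/mem_omega [[|n] // n_j xk] | ]; last exact: sortable_rem_end.
  by apply: (sortable_rem_pair n_j); rewrite !inE; case: xk => ->; lia.
Qed.

(** * The basis of Sort_2 *)

Lemma subseq_rem_of_size (T : eqType) (s t : seq T) : uniq s -> subseq t s -> size t < size s ->
  exists2 x, x \in s & subseq t (rem x s).
Proof.
move=> us ts lt_ts; have [x xs xt] : exists2 x, x \in s & x \notin t.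
  apply/hasP; apply: contraTT lt_ts => /hasPn s_t; rewrite -leqNgt.
  by apply: uniq_leq_size us _ => y /s_t; rewrite negbK.
exists x => //; rewrite rem_filter // subseq_filter ts andbT.
by apply/allP => y yt /=; apply: contraNneq xt => <-.
Qed.

Lemma in_basis_alpha j : in_basis (Sort 2) (alpha j).
Proof.
split; first exact: is_perm_alpha.
split; first by case=> _; apply: alpha_not_sortable.
move=> p pp [t [t_alpha t_p]] size_p; split=> //.
have [|x xa t_rem] := subseq_rem_of_size (uniq_alpha j) t_alpha; first by case: t_p => ->.
have u_rem : uniq (rem x (alpha j)) by apply: rem_uniq; apply: uniq_alpha.
exact: (sortable_pattern t_p u_rem t_rem (sortable_rem_alpha xa)).
Qed.

Lemma is_class_Sort2 : is_class (Sort 2).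
Proof.
split=> [s [] // | s p [ps ss] pp [t [ts tp]]]; split=> //.
by apply: (sortable_pattern tp _ ts ss); rewrite (perm_uniq ps) iota_uniq.
Qed.

Theorem mainTheorem4 :
  is_class (Sort 2) /\
  ~ (exists l : seq (seq nat), forall b, in_basis (Sort 2) b -> b \in l) /\
  (forall j : nat, in_basis (Sort 2) (alpha j)).
Proof.
split; first exact: is_class_Sort2.
split; last exact: in_basis_alpha.
move=> [l basis_l]; set j := \max_(b <- l) size b.
have := @leq_bigmax_seq _ l predT size _ (basis_l _ (in_basis_alpha j)) isT.
by rewrite size_alpha -/j; lia.
Qed.
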